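(* For $w\in S_n$, $$(\bar\chi^w)^\star=\sum_{z}(-1)^{|\iota(z)|-|\iota(y)|}\,\bar\chi^z,$$ where the sum is over those $z\in S_n$ for which the set $\{x\in C_z^\vee:\kappa(x)\ge\kappa(w^{-1})\}$ consists of exactly one element, and $y$ denotes that element.
   Context: Let $q$ be a prime power and $\mathfrak{ut}_n$ the additive group of strictly upper triangular $n\times n$ matrices over $\mathbb{F}_q$. For $w\in S_n$ (one-line notation): inversion table $\iota_k(w)=\#\{i<w^{-1}(k):w(i)>k\}$, $|\iota(w)|=\sum_k\iota_k(w)$; code $\kappa_k(w)=\#\{i<w(k):w^{-1}(i)>k\}$. Vectors are compared componentwise. $\mathfrak{ut}_w=\{x\in\mathfrak{ut}_n:x_{ij}\ne0\Rightarrow0<j-i\le\iota_i(w)\}$; $\mathfrak{ut}_v\subseteq\mathfrak{ut}_w$ iff $\iota(v)\le\iota(w)$ (inversion table order), and these subgroups form a lattice. The normal lattice supercharacter theory has supercharacters $\chi^w=\sum_\psi\psi(1)\psi$, over irreducible characters $\psi$ of $\mathfrak{ut}_n$ with $\mathfrak{ut}_w$ the largest lattice member contained in $\ker\psi$; $\mathrm{scf}(\mathfrak{ut}_n)$ is their span. The permutation character $\bar\chi^w$ is the character of $\mathrm{Ind}_{\mathfrak{ut}_w}^{\mathfrak{ut}_n}(\mathbf{1})$ (equivalently $\bar\chi^w=\sum_{v:\mathfrak{ut}_v\supseteq\mathfrak{ut}_w}\chi^v$). The involution $\star$ on $\mathrm{scf}(\mathfrak{ut}_n)$ is the linear map $\chi^w\mapsto\chi^{w^{-1}}$.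 For $z\in S_n$, $C_z^\vee$ is the Boolean sublattice of the inversion table order generated by the elements covered by $z$, namely the set of $x\in S_n$ with $\iota_k(z)-1\le\iota_k(x)\le\iota_k(z)$ for all $k$. *)

From HB Require Import structures.
From mathcomp Require Import all_boot all_order all_algebra all_fingroup all_field.
Set Implicit Arguments. Unset Strict Implicit. Unset Printing Implicit Defensive.
Import GRing.Theory Num.Theory.
Local Open Scope ring_scope.

(* Permutations of {1..n} are modelled as 'S_n = {perm 'I_n} (0-based values;
   all definitions only use order comparisons, so the shift is harmless). *)

Definition inv_table (n : nat) (w : 'S_n) (k : 'I_n) : nat :=
  #|[set i : 'I_n | (i < (w^-1)%g k)%N && (k < w i)%N]|.

Definition inv_size (n : nat) (w : 'S_n) : nat := (\sum_(k < n) inv_table w k)%N.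

Definition code (n : nat) (w : 'S_n) (k : 'I_n) : nat :=
  #|[set i : 'I_n | (i < w k)%N && (k < (w^-1)%g i)%N]|.

Definition ut_w (F : finFieldType) (n : nat) (w : 'S_n) : {set 'M[F]_n} :=
  [set x : 'M[F]_n | [forall i : 'I_n, forall j : 'I_n,
      (x i j != 0) ==> ((i < j)%N && (j - i <= inv_table w i)%N)]].

(* scf(ut_n): the span of the supercharacters chi^w, w in S_n, which form a
   basis; an element is represented by its coordinate vector in this basis. *)
Notation scf n := {ffun 'S_n -> algC^o}.

Definition supchar (n : nat) (w : 'S_n) : scf n := [ffun v => (v == w)%:R].

Definition perm_char (F : finFieldType) (n : nat) (w : 'S_n) : scf n :=
  \sum_(v : 'S_n | ut_w F w \subset ut_w F v) supchar v.

Definition star (n : nat) (f : scf n) : scf n :=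
  \sum_(w : 'S_n) f w *: supchar (w^-1)%g.

Definition Cvee (n : nat) (z : 'S_n) : {set 'S_n} :=
  [set x : 'S_n | [forall k : 'I_n,
     (inv_table z k <= (inv_table x k).+1)%N && (inv_table x k <= inv_table z k)%N]].

Definition Sset (n : nat) (w z : 'S_n) : {set 'S_n} :=
  [set x in Cvee z | [forall k : 'I_n, (code (w^-1)%g k <= code x k)%N]].

Definition the_y (n : nat) (w z : 'S_n) : 'S_n := odflt z [pick x in Sset w z].

From HB Require Import structures.
From mathcomp Require Import all_boot all_order all_algebra all_fingroup all_field.
From mathcomp Require Import zify.
Import GRing.Theory Num.Theory.
Local Open Scope ring_scope.
Set Implicit Arguments. Unset Strict Implicit. Unset Printing Implicit Defensive.

(* Evaluate both sides at the supercharacter chi^v.  As iota(v^-1) = kappa(v),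
   the left side is [kappa(w^-1) <= kappa(v)].  On the right, the alternating
   sum of (-1)^(|iota z| - |iota x|) over {x in C_z^vee : kappa(x) >= c} equals
   (-1)^(|iota z| - |iota y|) when that set is a singleton {y} and vanishes
   otherwise, so the right side is the double sum over z <= v and over such x.
   Exchanging the sums, the coefficient of x is the Moebius function
   sum_(z <= v, x in C_z^vee) (-1)^(|iota z| - |iota x|) = [x = v] of the
   inversion table order, which leaves [kappa(w^-1) <= kappa(v)].
   Both alternating sums are computed by induction on n, writing permutations
   as lift_perm p ord0 s: its inversion table is p followed by that of s, so
   C_z^vee and the signs split off the first coordinate, whose two candidate
   values iota_0(z) - 1 and iota_0(z) contribute with opposite signs. *)

Lemma ltn_lift2 n (h : 'I_n) (i j : 'I_n.-1) : (lift h i < lift h j)%N = (i < j)%N.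
Proof. by rewrite /= !ltnNge leq_bump2. Qed.

Lemma ltn_lift_pivot n (h : 'I_n) (i : 'I_n.-1) : (lift h i < h)%N = (i < h)%N.
Proof. by rewrite /= /bump; case: leqP => /= *; lia. Qed.

Lemma val_inord_pred n (p : 'I_n.+1) : (inord p.-1 : 'I_n.+1) = p.-1 :> nat.
Proof. by rewrite inordK // (leq_ltn_trans (leq_pred p)). Qed.

Lemma forall_ord_lift n (h : 'I_n.+1) (P : pred 'I_n.+1) :
  [forall k, P k] = P h && [forall k : 'I_n, P (lift h k)].
Proof.
apply/forallP/andP => [P_all | [Ph /forallP P_lift] k]; first by split; [|apply/forallP].
by case: (unliftP h k) => [k'|] ->.
Qed.

Lemma card_set_sum (T : finType) (P : pred T) : #|[set x | P x]| = (\sum_x P x)%N.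
Proof. by rewrite -sum1dep_card big_mkcond; apply: eq_bigr => x _; case: (P x). Qed.

Lemma sum_ord_ltn m n : (\sum_(i < n) (i < m : nat))%N = minn m n.
Proof.
elim: n => [|n IHn]; first by rewrite big_ord0 minn0.
by rewrite big_ord_recr /= IHn; case: (ltnP n m) => /= *; lia.
Qed.

Section LiftPerm0.

Variable n : nat.
Implicit Types (p q : 'I_n.+1) (s t : 'S_n).

Lemma lift_perm0V_ord0 p s : (lift_perm p ord0 s)^-1%g ord0 = p.
Proof. by rewrite lift_permV lift_perm_id. Qed.

Lemma lift_perm0V_lift p s k :
  (lift_perm p ord0 s)^-1%g (lift ord0 k) = lift p (s^-1%g k).
Proof. by rewrite lift_permV lift_perm_lift. Qed.

Let lift_perm0 (ps : 'I_n.+1 * 'S_n) : 'S_n.+1 := lift_perm ps.1 ord0 ps.2.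

Lemma lift_perm0_inj : injective lift_perm0.
Proof.
move=> [p s] [q t]; rewrite /lift_perm0 /= => eq_pq; have def_q : q = p.
  by rewrite -(lift_perm0V_ord0 q t) -eq_pq lift_perm0V_ord0.
subst q; congr pair; apply/permP => k; apply: (@lift_inj _ ord0).
by rewrite -(lift_perm_lift p ord0 s) eq_pq lift_perm_lift.
Qed.

Lemma lift_perm0_bij : bijective lift_perm0.
Proof. by apply: (inj_card_bij lift_perm0_inj); rewrite card_prod !card_Sn card_ord. Qed.

Lemma big_lift_perm0 R (idx : R) (op : Monoid.com_law idx) (P : pred 'S_n.+1) F :
  \big[op/idx]_(x | P x) F x =
  \big[op/idx]_p \big[op/idx]_(s | P (lift_perm p ord0 s)) F (lift_perm p ord0 s).
Proof.
rewrite (reindex lift_perm0) /=; last exact: onW_bij lift_perm0_bij.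
by rewrite pair_big_dep.
Qed.

Lemma lift_perm0P (x : 'S_n.+1) : exists p s, x = lift_perm p ord0 s.
Proof. by have [g _ gK] := lift_perm0_bij; exists (g x).1, (g x).2; rewrite -[x in LHS]gK. Qed.

Lemma eq_lift_perm0 p q s t :
  (lift_perm p ord0 s == lift_perm q ord0 t) = (p == q) && (s == t).
Proof. exact: (inj_eq lift_perm0_inj (p, s) (q, t)). Qed.

End LiftPerm0.

Lemma inv_table_sum n (w : 'S_n) k :
  inv_table w k = (\sum_(i : 'I_n) ((i < w^-1%g k) && (k < w i) : nat))%N.
Proof. exact: card_set_sum. Qed.

Lemma code_sum n (w : 'S_n) k :
  code w k = (\sum_(i : 'I_n) ((i < w k) && (k < w^-1%g i) : nat))%N.
Proof. exact: card_set_sum. Qed.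

Lemma code_invg n (w : 'S_n) k : code w^-1 k = inv_table w k.
Proof. by rewrite /code /inv_table invgK. Qed.

Section LiftPerm0Statistics.

Variable n : nat.
Implicit Types (p : 'I_n.+1) (s : 'S_n).

Lemma inv_table_lift_perm0_ord0 p s : inv_table (lift_perm p ord0 s) ord0 = p.
Proof.
rewrite inv_table_sum lift_perm0V_ord0 (bigD1_ord p) //= ltnn add0n.
under eq_bigr => i _ do rewrite lift_perm_lift lift0 andbT ltn_lift_pivot.
by rewrite sum_ord_ltn; apply/minn_idPl; rewrite -ltnS.
Qed.

Lemma inv_table_lift_perm0_lift p s k :
  inv_table (lift_perm p ord0 s) (lift ord0 k) = inv_table s k.
Proof.
rewrite !inv_table_sum lift_perm0V_lift (bigD1_ord p) //= lift_perm_id ltn0 andbF add0n.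
by apply: eq_bigr => i _; rewrite lift_perm_lift !ltn_lift2.
Qed.

Lemma code_lift_perm0_pivot p s : code (lift_perm p ord0 s) p = 0%N.
Proof. by rewrite code_sum lift_perm_id big1. Qed.

Lemma code_lift_perm0_lift p s j :
  code (lift_perm p ord0 s) (lift p j) = (code s j + (j < p))%N.
Proof.
rewrite !code_sum lift_perm_lift big_ord_recl /= lift_perm0V_ord0 ltn_lift_pivot addnC.
by congr addn; apply: eq_bigr => i _; rewrite lift_perm0V_lift !ltn_lift2.
Qed.

Lemma inv_size_lift_perm0 p s : inv_size (lift_perm p ord0 s) = (p + inv_size s)%N.
Proof.
rewrite /inv_size big_ord_recl inv_table_lift_perm0_ord0; congr addn.
by apply: eq_bigr => k _; rewrite inv_table_lift_perm0_lift.
Qed.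

End LiftPerm0Statistics.

Lemma inv_table_bound n (w : 'S_n) (k : 'I_n) : (k + inv_table w k < n)%N.
Proof.
elim: n w k => [|n IHn] w k; first by case: k.
have [p [s ->]] := lift_perm0P w.
case: (unliftP ord0 k) => [k'|] ->; last by rewrite inv_table_lift_perm0_ord0 add0n.
by rewrite inv_table_lift_perm0_lift lift0 addSn ltnS IHn.
Qed.

Definition inv_le n (a b : 'S_n) : bool :=
  [forall k, inv_table a k <= inv_table b k]%N.

Lemma ut_w_subset (F : finFieldType) n (a b : 'S_n) :
  (ut_w F a \subset ut_w F b) = inv_le a b.
Proof.
apply/subsetP/forallP => [sub_ab k | le_ab x].
  rewrite leqNgt; apply/negP => lt_ba.
  pose j := Ordinal (inv_table_bound a k).
  (* the elementary matrix at (k, k + iota_k(a)) lies in ut_w a but not in ut_w b *)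
  have : delta_mx k j \in ut_w F a.
    rewrite inE; apply/forallP => i; apply/forallP => j'; rewrite mxE; apply/implyP.
    case: (i =P k) => [->|_]; case: (j' =P j) => [->|_]; rewrite /= ?eqxx // => _.
    by apply/andP; split=> /=; lia.
  move/sub_ab; rewrite inE => /forallP/(_ k)/forallP/(_ j).
  by rewrite mxE !eqxx oner_neq0 /=; lia.
rewrite !inE => /forallP x_a; apply/forallP => i; apply/forallP => j; apply/implyP => nz_x.
have /forallP/(_ j)/implyP/(_ nz_x)/andP[-> le_ji] := x_a i.
exact: leq_trans le_ji (le_ab i).
Qed.

Lemma inv_le_lift_perm0 n (p q : 'I_n.+1) (s t : 'S_n) :
  inv_le (lift_perm p ord0 s) (lift_perm q ord0 t) = (p <= q)%N && inv_le s t.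
Proof.
rewrite /inv_le (forall_ord_lift ord0) !inv_table_lift_perm0_ord0; congr andb.
by apply: eq_forallb => k; rewrite !inv_table_lift_perm0_lift.
Qed.

Lemma Cvee_lift_perm0 n (p q : 'I_n.+1) (s t : 'S_n) :
  (lift_perm q ord0 s \in Cvee (lift_perm p ord0 t)) =
  (q <= p <= q.+1)%N && (s \in Cvee t).
Proof.
rewrite !inE (forall_ord_lift ord0) !inv_table_lift_perm0_ord0 [(p <= _)%N && _]andbC.
congr andb.
by apply: eq_forallb => k; rewrite !inv_table_lift_perm0_lift.
Qed.

Lemma inv_size_Cvee n (s t : 'S_n) : s \in Cvee t -> (inv_size s <= inv_size t)%N.
Proof. by rewrite inE => /forallP s_t; apply: leq_sum => k _; case/andP: (s_t k). Qed.

Definition inv_sign n (z x : 'S_n) : algC := (-1) ^+ (inv_size z - inv_size x).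

Lemma inv_sign_lift_perm0 n (p q : 'I_n.+1) (s t : 'S_n) :
  (q <= p)%N -> s \in Cvee t ->
  inv_sign (lift_perm p ord0 t) (lift_perm q ord0 s) = (-1) ^+ (p - q) * inv_sign t s.
Proof.
move=> le_qp /inv_size_Cvee le_st.
by rewrite /inv_sign !inv_size_lift_perm0 -exprD; congr (_ ^+ _); lia.
Qed.

Lemma big_ord_lower_cover R (idx : R) (op : Monoid.com_law idx) n
    (p : 'I_n.+1) (P : pred 'I_n.+1) (F : 'I_n.+1 -> R) :
  let F' q := if P q then F q else idx in
  \big[op/idx]_(q : 'I_n.+1 | (q <= p <= q.+1)%N && P q) F q =
  if p == ord0 then F' p else op (F' p) (F' (inord p.-1)).
Proof.
rewrite /= big_mkcondr.
case: eqP => [-> | /eqP p_neq0].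
  by apply: big_pred1 => q; rewrite /= leqn0 andbT.
rewrite (bigD1 p) ?leqnn ?leqnSn //=; congr (op _ _); apply: big_pred1 => q /=.
move: p_neq0; rewrite -!val_eqE /= val_inord_pred => p_gt0.
by apply/andP/eqP => [[/andP[? ?] ?] | ?]; [|split; [apply/andP; split|]]; lia.
Qed.

Lemma sum_sign_upper_cover n (q r : 'I_n.+1) :
  \sum_(p : 'I_n.+1 | (q <= p <= q.+1)%N && (p <= r)%N) (-1) ^+ (p - q) =
  (q == r)%:R :> algC.
Proof.
case: (ltngtP q r) => [lt_qr | gt_qr | eq_qr].
- have val_succ : (inord q.+1 : 'I_n.+1) = q.+1 :> nat.
    by rewrite inordK // (leq_ltn_trans lt_qr).
  rewrite (bigD1 q) /= ?leqnn ?leqnSn ?(ltnW lt_qr) //.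
  rewrite (big_pred1 (inord q.+1)) => [|p]; last first.
    apply/andP/eqP => [[/andP[/andP[? ?] ?]] | ->].
      by rewrite -val_eqE /= => ?; apply: val_inj; rewrite /= val_succ; lia.
    by rewrite -val_eqE /= val_succ; lia.
  rewrite val_succ subnn subSnn expr0 expr1 addrN.
  by case: eqP => // eq_qr; rewrite eq_qr ltnn in lt_qr.
- rewrite big_pred0 => [|p]; last by apply/negP => /andP[/andP[? ?] ?]; lia.
  by case: eqP => // eq_qr; rewrite eq_qr ltnn in gt_qr.
- have -> : q = r by apply: val_inj.
  rewrite (big_pred1 r) => [|p]; first by rewrite subnn eqxx.
  apply/andP/eqP => [[/andP[? ?] ?] | ->]; last by rewrite leqnn leqnSn.
  by apply: val_inj => /=; lia.
Qed.

Lemma sum_inv_sign_inv_le n (x v : 'S_n) :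
  \sum_(z | inv_le z v && (x \in Cvee z)) inv_sign z x = (x == v)%:R.
Proof.
elim: n x v => [|n IHn] x v.
  have S0_eq (a b : 'S_0) : a = b by apply/permP => -[].
  rewrite (big_pred1 x) => [|z]; first by rewrite /inv_sign subnn (S0_eq x v) eqxx.
  by rewrite /= (S0_eq z x) eqxx inE; apply/andP; split; apply/forallP => -[].
have [q [s ->]] := lift_perm0P x; have [r [u ->]] := lift_perm0P v.
transitivity (\sum_(p : 'I_n.+1 | (q <= p <= q.+1)%N && (p <= r)%N) (-1) ^+ (p - q) *
   \sum_(t | inv_le t u && (s \in Cvee t)) inv_sign t s).
  rewrite big_lift_perm0 [RHS]big_mkcond; apply: eq_bigr => p _.
  under eq_bigl => t do rewrite inv_le_lift_perm0 Cvee_lift_perm0.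
  case: ifP => [/andP[/andP[le_qp le_pq] le_pr] | not_p].
    rewrite mulr_sumr; apply: eq_big => [t | t /and3P[_ _ s_t]].
      by rewrite le_qp le_pq le_pr /=.
    by rewrite inv_sign_lift_perm0.
  rewrite big_pred0 // => t; apply/negP => /and3P[/andP[le_pr _] cover _].
  by rewrite cover le_pr in not_p.
by rewrite -big_distrl /= IHn sum_sign_upper_cover eq_lift_perm0 -natrM mulnb.
Qed.

Definition cvee_above n (c : 'I_n -> nat) (z : 'S_n) : {set 'S_n} :=
  [set x in Cvee z | [forall k, c k <= code x k]%N].

Lemma eq_cvee_above n (c1 c2 : 'I_n -> nat) z :
  c1 =1 c2 -> cvee_above c1 z = cvee_above c2 z.
Proof.
by move=> eq_c; apply/setP => x; rewrite !inE; under eq_forallb => k do rewrite eq_c.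
Qed.

(* The bound on s equivalent to c on lift_perm q ord0 s, by code_lift_perm0_lift. *)
Definition drop_bound n (c : 'I_n.+1 -> nat) (q : 'I_n.+1) (j : 'I_n) : nat :=
  (c (lift q j) - (j < q))%N.

Lemma cvee_above_lift_perm0 n (c : 'I_n.+1 -> nat) (p q : 'I_n.+1) (s t : 'S_n) :
  (lift_perm q ord0 s \in cvee_above c (lift_perm p ord0 t)) =
  [&& (q <= p <= q.+1)%N, c q == 0%N & s \in cvee_above (drop_bound c q) t].
Proof.
rewrite [LHS]inE Cvee_lift_perm0 (forall_ord_lift q) code_lift_perm0_pivot leqn0.
under eq_forallb => j do rewrite code_lift_perm0_lift addnC -leq_subLR.
by rewrite [in RHS]inE; case: (q <= p <= q.+1)%N; case: (c q == 0%N); case: (s \in Cvee t).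
Qed.

Lemma drop_bound_pred n (c : 'I_n.+1 -> nat) (p : 'I_n.+1) :
  p != ord0 -> c p = 0%N -> c (inord p.-1) = 0%N ->
  drop_bound c p =1 drop_bound c (inord p.-1).
Proof.
rewrite -val_eqE /= => p_gt0 cp0 cp'0 j.
rewrite /drop_bound; case: (eqVneq (j : nat) p.-1) => [eq_jp | ne_jp].
  have -> : lift p j = inord p.-1 by apply: val_inj; rewrite /= /bump val_inord_pred; lia.
  have -> : lift (inord p.-1) j = p by apply: val_inj; rewrite /= /bump val_inord_pred; lia.
  by rewrite cp0 cp'0.
have -> : lift p j = lift (inord p.-1) j.
  by apply: val_inj; rewrite /= /bump val_inord_pred; lia.
by rewrite val_inord_pred; congr (_ - _)%N; lia.
Qed.

Lemma big_cvee_above_lift_perm0 R (idx : R) (op : Monoid.com_law idx) n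
    (c : 'I_n.+1 -> nat) (p : 'I_n.+1) (t : 'S_n) F :
  \big[op/idx]_(x in cvee_above c (lift_perm p ord0 t)) F x =
  \big[op/idx]_(q : 'I_n.+1 | (q <= p <= q.+1)%N && (c q == 0%N))
     \big[op/idx]_(s in cvee_above (drop_bound c q) t) F (lift_perm q ord0 s).
Proof.
rewrite big_lift_perm0 [RHS]big_mkcond; apply: eq_bigr => q _.
under eq_bigl => s do rewrite cvee_above_lift_perm0.
by case: (q <= p <= q.+1)%N; case: (c q == 0%N); rewrite //= big_pred0.
Qed.

Lemma sum_inv_sign_cvee_above_eq0 n (c : 'I_n -> nat) (z : 'S_n) :
  #|cvee_above c z| != 1%N -> \sum_(x in cvee_above c z) inv_sign z x = 0.
Proof.
elim: n c z => [|n IHn] c z.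
  move=> card_neq1; suff -> : cvee_above c z = set0 by rewrite big_set0.
  by apply: cards0_eq; move: card_neq1 (max_card (cvee_above c z)); rewrite card_Sn fact0; lia.
have [p [t ->]] := lift_perm0P z.
have -> : #|cvee_above c (lift_perm p ord0 t)| =
    (\sum_(q : 'I_n.+1 | (q <= p <= q.+1)%N && (c q == 0%N))
       #|cvee_above (drop_bound c q) t|)%N.
  by rewrite -sum1_card big_cvee_above_lift_perm0; apply: eq_bigr => q _; rewrite sum1_card.
move=> card_neq1; rewrite big_cvee_above_lift_perm0.
under eq_bigr => q /andP[/andP[le_qp _] _] do
  under eq_bigr => s /setIdP[s_t _] do rewrite inv_sign_lift_perm0 //.
under eq_bigr do rewrite -mulr_sumr.
move: card_neq1; rewrite !big_ord_lower_cover subnn expr0 mul1r.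
case: (eqVneq p ord0) => [_ | p_neq0]; first by case: (c p == 0%N) => // /IHn.
have -> : (p - (inord p.-1 : 'I_n.+1) = 1)%N.
  by move: p_neq0; rewrite -val_eqE /= val_inord_pred; lia.
rewrite expr1 mulN1r.
case: (eqVneq (c p) 0%N) => cp; case: (eqVneq (c (inord p.-1)) 0%N) => cp' /=;
  rewrite ?add0r ?addr0 ?add0n ?addn0 => card_neq1.
- (* both first coordinates p and p - 1 are admissible: the two terms cancel *)
  by rewrite (eq_cvee_above _ (drop_bound_pred p_neq0 cp cp')) subrr.
- exact: IHn.
- by rewrite IHn ?oppr0.
- by [].
Qed.

Lemma sum_inv_sign_cvee_above n (c : 'I_n -> nat) (z : 'S_n) :
  \sum_(x in cvee_above c z) inv_sign z x =
  if #|cvee_above c z| == 1%N then inv_sign z (odflt z [pick x in cvee_above c z]) else 0.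
Proof.
case: ifP => [/cards1P[y def_S] | /negbT]; last exact: sum_inv_sign_cvee_above_eq0.
rewrite def_S big_set1; case: pickP => [x|]; first by rewrite inE => /eqP ->.
by move/(_ y); rewrite inE eqxx.
Qed.

Lemma sum_inv_le_cvee_above n (c : 'I_n -> nat) (v : 'S_n) :
  \sum_(z | inv_le z v) \sum_(x in cvee_above c z) inv_sign z x =
  [forall k, c k <= code v k]%N%:R.
Proof.
rewrite (exchange_big_dep (fun x => [forall k, c k <= code x k]%N)) /=; last first.
  by move=> z x _ /setIdP[].
transitivity (\sum_(x | [forall k, c k <= code x k]%N) (x == v)%:R : algC).
  apply: eq_bigr => x c_x; rewrite -sum_inv_sign_inv_le; apply: eq_bigl => z.
  by rewrite [x \in _]inE c_x andbT.
rewrite big_mkcond (bigD1 v) //= eqxx big1 ?addr0; first by case: ifP.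
by move=> x /negbTE ->; case: ifP.
Qed.

Lemma starE n (f : scf n) (v : 'S_n) : star f v = f v^-1%g.
Proof.
rewrite /star sum_ffunE (bigD1 v^-1%g) //= big1 ?addr0 => [|w ne_w].
  by rewrite !ffunE invgK eqxx; exact: mulr1.
by rewrite !ffunE -eq_invg_sym eq_sym (negbTE ne_w); exact: mulr0.
Qed.

Lemma perm_charE (F : finFieldType) n (w u : 'S_n) :
  perm_char F w u = (ut_w F w \subset ut_w F u)%:R.
Proof.
rewrite /perm_char sum_ffunE big_mkcond (bigD1 u) //= big1 ?addr0 => [|v ne_vu].
  by rewrite !ffunE eqxx; case: ifP.
by rewrite !ffunE eq_sym (negbTE ne_vu); case: ifP.
Qed.

Theorem theorem5p1 (F : finFieldType) (n : nat) (w : 'S_n) :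
  star (perm_char F w) =
  \sum_(z : 'S_n | #|Sset w z| == 1%N)
     (-1) ^+ (inv_size z - inv_size (the_y w z))%N *: perm_char F z.
Proof.
apply/ffunP => v; rewrite starE perm_charE ut_w_subset sum_ffunE.
have -> : inv_le w v^-1 = [forall k, code w^-1 k <= code v k]%N.
  by apply: eq_forallb => k; rewrite code_invg -[v in code v]invgK code_invg.
rewrite -sum_inv_le_cvee_above big_mkcond [RHS]big_mkcond; apply: eq_bigr => z _.
rewrite sum_inv_sign_cvee_above !ffunE perm_charE ut_w_subset /the_y.
have -> : Sset w z = cvee_above (code w^-1) z by [].
case: (inv_le z v); case: ifP => _ //=; first exact/esym/mulr1.
exact/esym/mulr0.
Qed.
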